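(* Let $\chi$ be a kernel as described in the context, and suppose in addition that its first-order algebraic moment vanishes identically: $m_1(\chi,u)=0$ for all $u\in\mathbb{R}^+$. Let $f\in C^{(2)}(\mathbb{R}^+)$. Then for every $x\in\mathbb{R}^+$, $$\lim_{w\to+\infty} w\big[(I_w^{\chi}f)(x)-f(x)\big]=\frac{(\theta f)(x)}{2}.$$
   Context: A kernel is a continuous function $\chi:\mathbb{R}^+\to\mathbb{R}$ satisfying: (i) $\sum_{k=-\infty}^{+\infty}\chi(e^{-k}u)=1$ for every $u\in\mathbb{R}^+$; (ii) $M_2(\chi)<+\infty$ and $\lim_{\gamma\to+\infty}\sum_{|k-\log u|>\gamma}|\chi(e^{-k}u)|\,|k-\log u|^2=0$ uniformly with respect to $u\in\mathbb{R}^+$. Algebraic moments: $m_\nu(\chi,u)=\sum_{k\in\mathbb{Z}}\chi(e^{-k}u)(k-\log u)^\nu$; absolute moments: $M_\nu(\chi,u)=\sum_{k\in\mathbb{Z}}|\chi(e^{-k}u)|\,|k-\log u|^\nu$, $M_\nu(\chi)=\sup_{u>0}M_\nu(\chi,u)$. For $w>0$, $x\in\mathbb{R}^+$: $(I_w^{\chi}f)(x)=\sum_{k\in\mathbb{Z}}\chi(e^{-k}x^w)\,w\int_{k/w}^{(k+1)/w}f(e^u)\,du$. Mellin differential operator: $(\theta f)(x)=xf'(x)$, and $\theta^1=\theta$, $\theta^r=\theta(\theta^{r-1})$. $C(\mathbb{R}^+)$ denotes the bounded continuous functions on $\mathbb{R}^+$, and $C^{(n)}(\mathbb{R}^+)$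 denotes the functions $f\in C(\mathbb{R}^+)$ such that $\theta^j f$ exists and belongs to $C(\mathbb{R}^+)$ for $j=1,\dots,n$. *)

From Stdlib Require Import Reals Lra ZArith Classical ClassicalEpsilon.
Open Scope R_scope.

(* Symmetric partial sum  sum_{k=-N}^{N} a k  of a doubly infinite series. *)
Definition zpsum (a : Z -> R) (N : nat) : R :=
  sum_f_R0 (fun i => a (Z.of_nat i - Z.of_nat N)%Z) (2 * N).

Definition zsum (a : Z -> R) (l : R) : Prop := Un_cv (zpsum a) l.

(* The value of sum_{k in Z} a k (0 by convention if it does not converge). *)
Definition Zser (a : Z -> R) : R :=
  match excluded_middle_informative (exists l, zsum a l) with
  | left H => proj1_sig (constructive_indefinite_description _ H)
  | right _ => 0
  end.

(* Riemann integral of g over [a,b] (0 by convention if not integrable). *)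
Definition RInt (g : R -> R) (a b : R) : R :=
  match excluded_middle_informative
          (exists pr : Riemann_integrable g a b, True) with
  | left H => RiemannInt (proj1_sig (constructive_indefinite_description _ H))
  | right _ => 0
  end.

Definition kernel (chi : R -> R) : Prop :=
  (forall u, 0 < u -> continuity_pt chi u) /\
  (forall u, 0 < u -> zsum (fun k => chi (exp (- IZR k) * u)) 1) /\
  (* (ii) M_2(chi) < +infinity *)
  (exists B, forall u, 0 < u -> forall N,
     zpsum (fun k => Rabs (chi (exp (- IZR k) * u)) * Rabs (IZR k - ln u) ^ 2) N
       <= B) /\
  (* (ii) uniform vanishing of the tails *)
  (forall eps, 0 < eps -> exists g0, forall g, g0 < g -> forall u, 0 < u ->
     forall N,
       zpsum (fun k => if Rlt_dec g (Rabs (IZR k - ln u))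
                       then Rabs (chi (exp (- IZR k) * u)) * Rabs (IZR k - ln u) ^ 2
                       else 0) N <= eps).

Definition m_moment_is (chi : R -> R) (nu : nat) (u l : R) : Prop :=
  zsum (fun k => chi (exp (- IZR k) * u) * (IZR k - ln u) ^ nu) l.

Definition Iw (chi f : R -> R) (w x : R) : R :=
  Zser (fun k => chi (exp (- IZR k) * Rpower x w)
                 * (w * RInt (fun u => f (exp u)) (IZR k / w) (IZR (k + 1) / w))).

Definition bcont (g : R -> R) : Prop :=
  (forall x, 0 < x -> continuity_pt g x) /\
  (exists B, forall x, 0 < x -> Rabs (g x) <= B).

Definition theta_of (g' : R -> R) : R -> R := fun x => x * g' x.

(* In logarithmic coordinates F(s) = f(e^s) one has F' = (theta f) o exp and
   F'' = (theta^2 f) o exp, which is bounded.  Expanding F to first order at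
   ln x, the mean of F over the cell [k/w, (k+1)/w] is
   f(x) + (theta f)(x) (k - w ln x + 1/2) / w + O((|k - w ln x| + 1)^2 / w^2).
   Summing against chi(e^{-k} x^w), the main terms give
   f(x) m_0 + (theta f)(x) (m_1 + m_0/2) / w = f(x) + (theta f)(x) / (2w),
   and the remainder is O(1/w^2) because M_0 and M_2 are finite. *)

From Pilot Require Import Defs.
From Stdlib Require Import Reals Lra Lia ZArith ClassicalEpsilon.
From Coquelicot Require Import Coquelicot.
Open Scope R_scope.

Lemma zpsum_S a N :
  zpsum a (S N) = a (- Z.of_nat N - 1)%Z + zpsum a N + a (Z.of_nat N + 1)%Z.
Proof.
  unfold zpsum.
  replace (2 * S N)%nat with (S (S (2 * N))) by lia.
  rewrite tech5, decomp_sum by lia; simpl Init.Nat.pred.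
  rewrite (sum_eq _ (fun i => a (Z.of_nat i - Z.of_nat N)%Z)).
  - f_equal; [f_equal|]; f_equal; lia.
  - intros i _; f_equal; lia.
Qed.

Lemma zpsum_ext a b N : (forall k, a k = b k) -> zpsum a N = zpsum b N.
Proof. intros H; unfold zpsum; apply sum_eq; intros; apply H. Qed.

Lemma zpsum_plus a b N : zpsum (fun k => a k + b k) N = zpsum a N + zpsum b N.
Proof. unfold zpsum; apply sum_plus. Qed.

Lemma zpsum_scal c a N : zpsum (fun k => c * a k) N = c * zpsum a N.
Proof.
  unfold zpsum; rewrite scal_sum; apply sum_eq; intros; ring.
Qed.

Lemma zpsum_le a b N : (forall k, a k <= b k) -> zpsum a N <= zpsum b N.
Proof. intros H; unfold zpsum; apply sum_Rle; intros; apply H. Qed.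

Lemma zpsum_abs a N : Rabs (zpsum a N) <= zpsum (fun k => Rabs (a k)) N.
Proof. apply sum_f_R0_triangle. Qed.

Lemma zpsum_ge0 a N : (forall k, 0 <= a k) -> 0 <= zpsum a N.
Proof. intros H; unfold zpsum; apply cond_pos_sum; intros; apply H. Qed.

Lemma zpsum_indicator A z N :
  zpsum (fun k => if Z.eq_dec k z then A else 0) N =
  if Z_le_dec (Z.abs z) (Z.of_nat N) then A else 0.
Proof.
  induction N as [|N IHN].
  - unfold zpsum; change (sum_f_R0 ?g (2 * 0)) with (g 0%nat); cbv beta.
    destruct (Z.eq_dec (Z.of_nat 0 - Z.of_nat 0) z), (Z_le_dec (Z.abs z) (Z.of_nat 0)); lia || reflexivity.
  - rewrite zpsum_S, IHN.
    destruct (Z.eq_dec _ z), (Z_le_dec _ (Z.of_nat N)), (Z.eq_dec _ z),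
      (Z_le_dec _ (Z.of_nat (S N))); lia || lra.
Qed.

Lemma zsum_ext a b l : (forall k, a k = b k) -> zsum a l -> zsum b l.
Proof.
  intros H Ha. apply (Un_cv_ext (zpsum a)); [|exact Ha].
  intros; apply zpsum_ext, H.
Qed.

Lemma zsum_plus a b la lb :
  zsum a la -> zsum b lb -> zsum (fun k => a k + b k) (la + lb).
Proof.
  intros Ha Hb. apply (Un_cv_ext (fun n => zpsum a n + zpsum b n)).
  - intros; now rewrite zpsum_plus.
  - now apply CV_plus.
Qed.

Lemma zsum_scal c a l : zsum a l -> zsum (fun k => c * a k) (c * l).
Proof.
  intros Ha. apply (Un_cv_ext (fun n => c * zpsum a n)).
  - intros; now rewrite zpsum_scal.
  - apply CV_mult; [|exact Ha].
    intros e He; exists 0%nat; intros; unfold R_dist.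
    rewrite Rminus_diag, Rabs_R0; lra.
Qed.

Lemma Zser_eq a l : zsum a l -> Zser a = l.
Proof.
  intros H. unfold Zser.
  destruct excluded_middle_informative as [e|n].
  - destruct constructive_indefinite_description as [l' Hl']; simpl.
    eapply UL_sequence; eauto.
  - exfalso; apply n; eauto.
Qed.

Lemma zsum_nonneg_bounded a M :
  (forall k, 0 <= a k) -> (forall N, zpsum a N <= M) -> exists l, zsum a l.
Proof.
  intros H0 HM.
  assert (Hg : Un_growing (zpsum a)).
  { intro n; rewrite zpsum_S.
    pose proof (H0 (- Z.of_nat n - 1)%Z); pose proof (H0 (Z.of_nat n + 1)%Z); lra. }
  assert (Hb : has_ub (zpsum a)) by (exists M; intros y [i ->]; apply HM).
  destruct (growing_cv _ Hg Hb) as [l Hl]; now exists l.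
Qed.

(* [e] is the difference of its positive and negative parts, two nonnegative
   series whose partial sums are bounded by [M]. *)
Lemma zsum_dominated e D M :
  (forall k, Rabs (e k) <= D k) -> (forall N, zpsum D N <= M) ->
  exists l, zsum e l /\ Rabs l <= M.
Proof.
  intros HD HM.
  assert (Hpart : forall s, s = 1 \/ s = -1 -> exists l,
            zsum (fun k => (Rabs (e k) + s * e k) / 2) l).
  { intros s Hs; apply (zsum_nonneg_bounded _ M).
    - intros k; pose proof (proj1 (Rabs_le_between (e k) (Rabs (e k))) (Rle_refl _)).
      destruct Hs as [->| ->]; lra.
    - intros N; eapply Rle_trans; [|apply (HM N)]; apply zpsum_le; intros k.
      pose proof (proj1 (Rabs_le_between (e k) (Rabs (e k))) (Rle_refl _)).
      specialize (HD k); destruct Hs as [->| ->]; lra. }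
  destruct (Hpart 1 (or_introl eq_refl)) as [lp Hp].
  destruct (Hpart (-1) (or_intror eq_refl)) as [lm Hm].
  assert (He : zsum e (lp + (-1) * lm)).
  { eapply zsum_ext; [|apply zsum_plus; [exact Hp | apply zsum_scal; exact Hm]].
    intros k; cbv beta; field. }
  exists (lp + (-1) * lm); split; [exact He|].
  apply Rle_cv_lim with (Vn := fun _ => M) (2 := cv_cvabs _ _ He).
  - intros n; eapply Rle_trans; [apply zpsum_abs|].
    eapply Rle_trans; [|apply (HM n)]; apply zpsum_le, HD.
  - intros eps Heps; exists 0%nat; intros; unfold R_dist.
    rewrite Rminus_diag, Rabs_R0; lra.
Qed.

Lemma Rabs_sub_between a b c :
  Rmin a b <= c <= Rmax a b -> Rabs (c - a) <= Rabs (b - a).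
Proof.
  unfold Rmin, Rmax, Rabs.
  destruct Rle_dec, Rcase_abs, Rcase_abs; lra.
Qed.

Section TaylorEstimate.
Variables (F H G : R -> R) (B : R).
Hypothesis F_deriv : forall s, derivable_pt_lim F s (H s).
Hypothesis H_deriv : forall s, derivable_pt_lim H s (G s).
Hypothesis G_bound : forall s, Rabs (G s) <= B.

Lemma taylor_order1 l s : Rabs (F s - F l - H l * (s - l)) <= B * (s - l) ^ 2.
Proof.
  set (psi := fun s => F s - H l * s).
  assert (psi_deriv : forall t, derivable_pt_lim psi t (H t - H l)).
  { intros t; apply derivable_pt_lim_minus; [apply F_deriv|].
    rewrite <- (Rmult_1_r (H l)) at 2.
    apply derivable_pt_lim_scal, derivable_pt_lim_id. }
  destruct (MVT_abs psi _ l s (fun c _ => psi_deriv c)) as [c [Ec Hc]].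
  destruct (MVT_abs H G l c (fun t _ => H_deriv t)) as [c' [Ec' _]].
  replace (F s - F l - H l * (s - l)) with (psi s - psi l) by (unfold psi; ring).
  rewrite Ec, Ec', <- (pow2_abs (s - l)).
  pose proof (Rabs_sub_between l s c Hc).
  pose proof (Rabs_pos (c - l)); pose proof (Rabs_pos (s - l)).
  pose proof (G_bound c').
  replace (Rabs (s - l) ^ 2) with (Rabs (s - l) * Rabs (s - l)) by ring.
  rewrite <- Rmult_assoc.
  apply Rmult_le_compat_r; [lra|].
  apply Rmult_le_compat; auto using Rabs_pos.
Qed.

Lemma ex_RInt_F a b : ex_RInt F a b.
Proof.
  apply (ex_RInt_continuous (V := R_CompleteNormedModule)); intros t _.
  apply continuity_pt_filterlim, derivable_continuous_pt.
  exists (H t); apply F_deriv.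
Qed.

(* The first-order Taylor polynomial of [F] at [l] averages to
   [F l + H l * (a - l + h / 2)] over the cell [[a, a + h]]. *)
Lemma RInt_cell_average l a h : 0 < h ->
  Rabs (RInt F a (a + h) / h - F l - H l * (a - l + h / 2))
  <= B * (Rabs (a - l) + h) ^ 2.
Proof.
  intros Hh.
  set (P := fun t => F l + H l * (t - l)).
  set (Q := fun t => F l * t + H l * (t - l) ^ 2 / 2).
  assert (P_int : is_RInt P a (a + h) (Q (a + h) - Q a)).
  { apply (is_RInt_derive (V := R_CompleteNormedModule)).
    - intros t _; unfold P, Q; auto_derive; [exact I | field].
    - intros t _; apply continuity_pt_filterlim, derivable_continuous_pt.
      unfold P; reg. }
  assert (P_ex : ex_RInt P a (a + h)) by (eexists; exact P_int).
  assert (Hdiff : RInt F a (a + h) - h * (F l + H l * (a - l + h / 2))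
                  = RInt (fun t => F t - P t) a (a + h)).
  { rewrite (RInt_minus (V := R_CompleteNormedModule) F P); auto using ex_RInt_F.
    rewrite (is_RInt_unique P a (a + h) _ P_int).
    change (minus ?x ?y) with (x - y); unfold Q; field. }
  assert (Hrem : Rabs (RInt (fun t => F t - P t) a (a + h))
                 <= h * (B * (Rabs (a - l) + h) ^ 2)).
  { set (M := B * (Rabs (a - l) + h) ^ 2).
    replace (h * M) with ((a + h - a) * M) by ring.
    apply abs_RInt_le_const; [lra|..].
    - apply (ex_RInt_minus (V := R_NormedModule)); auto using ex_RInt_F.
    - intros t Ht; unfold P.
      replace (F t - (F l + H l * (t - l))) with (F t - F l - H l * (t - l)) by ring.
      eapply Rle_trans; [apply taylor_order1|].
      apply Rmult_le_compat_l.
      + pose proof (G_bound 0); pose proof (Rabs_pos (G 0)); lra.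
      + rewrite <- (pow2_abs (t - l)); apply pow_incr; split; [apply Rabs_pos|].
        replace (t - l) with ((a - l) + (t - a)) by ring.
        eapply Rle_trans; [apply Rabs_triang|].
        rewrite (Rabs_pos_eq (t - a)); lra. }
  replace (RInt F a (a + h) / h - F l - H l * (a - l + h / 2))
    with ((RInt F a (a + h) - h * (F l + H l * (a - l + h / 2))) / h)
    by (field; lra).
  rewrite Hdiff, Rabs_div, (Rabs_pos_eq h) by lra.
  apply Rmult_le_reg_r with h; [lra|].
  unfold Rdiv; rewrite Rmult_assoc, Rinv_l, Rmult_1_r by lra; lra.
Qed.

End TaylorEstimate.

Lemma kernel_bounded_near_one chi :
  (forall u, 0 < u -> continuity_pt chi u) ->
  exists A, 0 <= A /\ forall v, exp (-1) <= v <= exp 1 -> Rabs (chi v) <= A.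
Proof.
  intros Hc.
  assert (He : exp (-1) <= exp 1) by (apply Rlt_le, exp_increasing; lra).
  destruct (continuity_ab_maj (fun v => Rabs (chi v)) _ _ He) as [M [HM _]].
  - intros c Hc'; apply (continuity_pt_comp chi Rabs).
    + apply Hc; pose proof (exp_pos (-1)); lra.
    + apply Rcontinuity_abs.
  - exists (Rabs (chi M)); split; [apply Rabs_pos | exact HM].
Qed.

Lemma integer_near_real L k :
  Rabs (IZR k - L) < 1 -> k = (up L - 1)%Z \/ k = up L.
Proof.
  intros Hk; destruct (Rabs_def2 _ _ Hk) as [Hk1 Hk2].
  destruct (archimed L) as [Hup1 Hup2].
  assert ((up L - 2 < k)%Z) by (apply lt_IZR; rewrite minus_IZR; lra).
  assert ((k < up L + 1)%Z) by (apply lt_IZR; rewrite plus_IZR; lra).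
  lia.
Qed.

(* Split the sum at [|k - ln u| = 1]: beyond it [(d + 1)^2 <= 4 d^2] is
   controlled by [M_2], below it lie at most the two indices
   [up (ln u) - 1] and [up (ln u)], where [chi] is bounded. *)
Lemma kernel_moment_bound chi : kernel chi -> exists K, 0 <= K /\
  forall u, 0 < u -> forall N,
  zpsum (fun k => Rabs (chi (exp (- IZR k) * u)) * (Rabs (IZR k - ln u) + 1) ^ 2) N
  <= K.
Proof.
  intros [Hc [_ [[B HB] _]]].
  destruct (kernel_bounded_near_one chi Hc) as [A [HA0 HA]].
  assert (B0 : 0 <= B).
  { eapply Rle_trans; [|apply (HB 1 Rlt_0_1 0%nat)]; apply zpsum_ge0; intros k.
    apply Rmult_le_pos; [apply Rabs_pos | apply pow_le, Rabs_pos]. }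
  exists (4 * B + 8 * A); split; [lra|].
  intros u Hu N. set (L := ln u). set (z := (up L - 1)%Z).
  set (delta := fun j k => if Z.eq_dec k j then 4 * A else 0).
  eapply Rle_trans.
  - apply (zpsum_le _ (fun k =>
      4 * (Rabs (chi (exp (- IZR k) * u)) * Rabs (IZR k - L) ^ 2)
      + delta z k + delta (up L) k)).
    intros k.
    set (c := Rabs (chi (exp (- IZR k) * u))); set (d := Rabs (IZR k - L)).
    assert (c0 : 0 <= c) by apply Rabs_pos.
    assert (d0 : 0 <= d) by apply Rabs_pos.
    assert (delta0 : forall j, 0 <= delta j k)
      by (intros j; unfold delta; destruct Z.eq_dec; lra).
    pose proof (delta0 z); pose proof (delta0 (up L)).
    destruct (Rle_dec 1 d) as [Hd|Hd].
    + assert (c * (d + 1) ^ 2 <= 4 * (c * d ^ 2)); [|lra].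
      replace (4 * (c * d ^ 2)) with (c * (2 * d) ^ 2) by ring.
      apply Rmult_le_compat_l, pow_incr; lra.
    + apply Rnot_le_lt in Hd; destruct (Rabs_def2 _ _ Hd) as [Hd1 Hd2].
      assert (Hck : c <= A).
      { apply HA; rewrite <- (exp_ln u Hu), <- exp_plus; fold L.
        split; apply Rlt_le, exp_increasing; lra. }
      assert (c * (d + 1) ^ 2 <= 4 * A).
      { replace (4 * A) with (A * 2 ^ 2) by ring.
        apply Rmult_le_compat; auto using pow_le with real.
        apply pow_incr; lra. }
      assert (0 <= c * d ^ 2) by (apply Rmult_le_pos, pow_le; auto).
      unfold delta; destruct (integer_near_real L k Hd) as [-> | ->];
        destruct Z.eq_dec; destruct Z.eq_dec; lia || lra.
  - rewrite !zpsum_plus, zpsum_scal; unfold delta; rewrite !zpsum_indicator.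
    pose proof (HB u Hu N) as HBu; fold L in HBu.
    do 2 (destruct Z_le_dec); lra.
Qed.

Lemma RInt_Reals_eq g a b : ex_RInt g a b -> Defs.RInt g a b = RInt g a b.
Proof.
  intros He; unfold Defs.RInt.
  destruct excluded_middle_informative as [e|n].
  - destruct constructive_indefinite_description as [pr Hpr]; simpl.
    symmetry; apply RInt_Reals.
  - exfalso; apply n; exists (ex_RInt_Reals_0 _ _ _ He); exact I.
Qed.

Section SamplingExpansion.
Variables (chi F H G : R -> R) (B K l : R).
Hypothesis chi_partition : forall u, 0 < u -> zsum (fun k => chi (exp (- IZR k) * u)) 1.
Hypothesis chi_moment1 : forall u, 0 < u -> m_moment_is chi 1 u 0.
Hypothesis chi_moment_bound : forall u, 0 < u -> forall N,
  zpsum (fun k => Rabs (chi (exp (- IZR k) * u)) * (Rabs (IZR k - ln u) + 1) ^ 2) N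
  <= K.
Hypothesis F_deriv : forall s, derivable_pt_lim F s (H s).
Hypothesis H_deriv : forall s, derivable_pt_lim H s (G s).
Hypothesis G_bound : forall s, Rabs (G s) <= B.

Lemma cell_mean_expansion w k : 0 < w ->
  Rabs (w * Defs.RInt F (IZR k / w) (IZR (k + 1) / w)
        - F l - H l * (IZR k - w * l + / 2) / w)
  <= B * (Rabs (IZR k - w * l) + 1) ^ 2 / w ^ 2.
Proof.
  intros Hw.
  replace (IZR (k + 1) / w) with (IZR k / w + / w)
    by (rewrite plus_IZR; field; lra).
  rewrite RInt_Reals_eq by apply (ex_RInt_F F H), F_deriv.
  pose proof (RInt_cell_average F H G B F_deriv H_deriv G_bound l (IZR k / w) (/ w)
                (Rinv_0_lt_compat w Hw)) as Hcell.
  replace (IZR k / w - l) with ((IZR k - w * l) / w) in Hcell by (field; lra).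
  replace (Rabs ((IZR k - w * l) / w) + / w) with ((Rabs (IZR k - w * l) + 1) / w)
    in Hcell by (unfold Rdiv; rewrite Rabs_mult, Rabs_inv, (Rabs_pos_eq w) by lra;
                 field; lra).
  replace (B * (Rabs (IZR k - w * l) + 1) ^ 2 / w ^ 2)
    with (B * ((Rabs (IZR k - w * l) + 1) / w) ^ 2) by (field; lra).
  replace (w * RInt F (IZR k / w) (IZR k / w + / w) - F l - H l * (IZR k - w * l + / 2) / w)
    with (RInt F (IZR k / w) (IZR k / w + / w) / / w - F l
          - H l * ((IZR k - w * l) / w + / w / 2)) by (field; lra).
  exact Hcell.
Qed.

(* Summing the cell expansion against [chi]: the constant term gives [F l m_0],
   the linear one [H l (m_1 + m_0 / 2) / w], the remainder is [O(K / w^2)]. *)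
Lemma sampling_series_expansion w : 0 < w -> exists E,
  Zser (fun k => chi (exp (- IZR k) * exp (w * l))
                 * (w * Defs.RInt F (IZR k / w) (IZR (k + 1) / w)))
  = F l + H l / (2 * w) + E /\ Rabs E <= B * K / w ^ 2.
Proof.
  intros Hw.
  set (u := exp (w * l)).
  assert (Hu : 0 < u) by apply exp_pos.
  assert (lnu : ln u = w * l) by apply ln_exp.
  set (c := fun k => chi (exp (- IZR k) * u)).
  set (r := fun k => w * Defs.RInt F (IZR k / w) (IZR (k + 1) / w)
                     - F l - H l * (IZR k - w * l + / 2) / w).
  destruct (zsum_dominated (fun k => c k * r k)
              (fun k => B / w ^ 2 * (Rabs (c k) * (Rabs (IZR k - ln u) + 1) ^ 2))
              (B / w ^ 2 * K)) as [E [HE HEbound]].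
  - intros k; unfold r; rewrite Rabs_mult, lnu.
    eapply Rle_trans;
      [apply Rmult_le_compat_l; [apply Rabs_pos | exact (cell_mean_expansion w k Hw)]|].
    right; field; lra.
  - intros N; rewrite zpsum_scal.
    apply Rmult_le_compat_l; [|apply chi_moment_bound, Hu].
    apply Rmult_le_pos; [|apply Rlt_le, Rinv_0_lt_compat, pow_lt, Hw].
    pose proof (G_bound 0); pose proof (Rabs_pos (G 0)); lra.
  - exists E; split; [|unfold Rdiv in *; lra].
    apply Zser_eq.
    pose proof (chi_partition u Hu) as Hc0.
    pose proof (chi_moment1 u Hu) as Hc1; unfold m_moment_is in Hc1.
    replace (F l + H l / (2 * w) + E)
      with (F l * 1 + H l / w * 0 + H l / (2 * w) * 1 + E) by (field; lra).
    eapply zsum_ext;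
      [|apply zsum_plus; [apply zsum_plus; [apply zsum_plus|]|exact HE];
        apply zsum_scal; eassumption].
    intros k; unfold r, c; rewrite lnu; field; lra.
Qed.

End SamplingExpansion.

Lemma derivable_pt_lim_comp_exp g g' s :
  derivable_pt_lim g (exp s) (g' (exp s)) ->
  derivable_pt_lim (fun t => g (exp t)) s (theta_of g' (exp s)).
Proof.
  intros Hg; unfold theta_of; rewrite Rmult_comm.
  exact (derivable_pt_lim_comp exp g s _ _ (derivable_pt_lim_exp s) Hg).
Qed.

Theorem theorem2 (chi f f' g' : R -> R)
  (Hchi : kernel chi)
  (Hm1 : forall u, 0 < u -> m_moment_is chi 1 u 0)
  (* f in C^(2)(R^+): f, theta f, theta^2 f exist and are bounded continuous *)
  (Hf : bcont f)
  (Hf' : forall x, 0 < x -> derivable_pt_lim f x (f' x))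
  (Htf : bcont (theta_of f'))
  (Hg' : forall x, 0 < x -> derivable_pt_lim (theta_of f') x (g' x))
  (Httf : bcont (theta_of g'))
  (x : R) (hx : 0 < x) :
  forall eps, 0 < eps -> exists W, forall w, W < w ->
    Rabs (w * (Iw chi f w x - f x) - theta_of f' x / 2) < eps.
Proof.
  intros eps Heps.
  destruct Httf as [_ [B HB]].
  assert (B0 : 0 <= B) by (eapply Rle_trans; [apply Rabs_pos | apply (HB 1 Rlt_0_1)]).
  destruct (kernel_moment_bound chi Hchi) as [K [K0 HK]].
  exists (B * K / eps); intros w Hw.
  assert (Hw0 : 0 < w).
  { eapply Rle_lt_trans; [|exact Hw]. apply Rdiv_le_0_compat; [nra | exact Heps]. }
  apply Rlt_div_l in Hw; [|exact Heps].
  destruct (sampling_series_expansion chi (fun s => f (exp s))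
              (fun s => theta_of f' (exp s)) (fun s => theta_of g' (exp s)) B K (ln x)
              (proj1 (proj2 Hchi)) Hm1 HK
              (fun s => derivable_pt_lim_comp_exp _ _ _ (Hf' _ (exp_pos s)))
              (fun s => derivable_pt_lim_comp_exp _ _ _ (Hg' _ (exp_pos s)))
              (fun s => HB _ (exp_pos s)) w Hw0) as [E [HI HE]].
  unfold Iw, Rpower; rewrite HI, exp_ln by exact hx.
  replace (w * (f x + theta_of f' x / (2 * w) + E - f x) - theta_of f' x / 2)
    with (w * E) by (field; lra).
  rewrite Rabs_mult, Rabs_pos_eq by lra.
  apply Rle_lt_trans with (B * K / w).
  - replace (B * K / w) with (w * (B * K / w ^ 2)) by (field; lra).
    apply Rmult_le_compat_l; lra.
  - apply Rlt_div_l; [exact Hw0 | lra].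
Qed.
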